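(* For the initial pair $(t,x)$, the following are equivalent. i) There exists a unique $v^*\in l^2(\mathbb{T}_t; \mathbb{R}^{m_2})$ such that $J_2(k, X_k^*; {\alpha^t}(x, v^* )|_{\mathbb{T}_k}, v^*|_{\mathbb{T}_k})\leq J_2(k, X_k^*; {\alpha^t}(x, v^{*-k})|_{\mathbb{T}_k}, (v_k, v^*|_{\mathbb{T}_{k+1}}))$ for any $k\in\mathbb{T}_t$ and any $v_k\in l^2(k; \mathbb{R}^{m_2})$, where $X^*_{k+1}=AX^*_k+B_1[\alpha^t(x, v^* )]_{k}+B_2v^*_k$, $X^*_t=x$, and $v^{*-k}_\ell=v_k$ for $\ell=k$, $v^{*-k}_\ell=v^*_\ell$ for $\ell\neq k$, $\ell\in\mathbb{T}_t$ (the state inside the right-hand cost starts at $X_k^*$ at time $k$ and is driven by $\alpha^t(x,v^{*-k})$, $v^{*-k}$). ii) There exists a unique $v^*\in l^2(\mathbb{T}_t; \mathbb{R}^{m_2})$ such that, for all $k\in\mathbb{T}_t$, \begin{eqnarray*} 0&=&\Big{[}\widetilde{B}_{k}^T-\sum_{i=t}^{k-1}D_i^{(k)}(H_k^1)^TB_1^T\Big{]}Z_{k+1}^*+\Big(\widetilde{B}_{k}^T+\sum_{i=t}^{k-1}D_i^{(k)}\widetilde{A}_k^T\Big)\overline{Z}_{k+1}^{(k)*}+\Big{[}(H^2_k)^TR_2H_k^1+\sum_{i=t}^{k-1}D_i^{(k)}(H_k^1)^TR_2H_k^1\Big{]}X_k^*\\ &&+\Big{[}W_2+(H^2_k)^TR_2H^2_k+\sum_{i=t}^{k-1}D_i^{(k)}(H_k^1)^TR_2H^2_k\Big{]}v_k^*+\Big{[}(H^2_k)^TR_2H_k^3+\sum_{i=t}^{k-1}D_i^{(k)}(H_k^1)^TR_2H_k^3\Big{]}\pi_{k+1}^*,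 \end{eqnarray*} where $Z_k^*=Q_2X_{k}^*+A^TZ_{k+1}^*$, $Z_{N}^*=G_2X_N^*$; for each $k\in\mathbb{T}_t$, $\overline{Z}_{\ell}^{(k)*}=(H_{\ell}^1)^TR_2(H_{\ell}^1X_{\ell}^*+H^2_{\ell}v_{\ell}^*+H_{\ell}^3\pi_{\ell+1}^* )-(H_{\ell}^1)^TB_1^TZ_{\ell+1}^*+\widetilde{A}_{\ell}^T\overline{Z}_{\ell+1}^{(k)*}$, $\ell\in\mathbb{T}_k$, $\overline{Z}_{N}^{(k)*}=0$; and $X_{k+1}^*=\widetilde{A}_kX_k^*+\widetilde{B}_kv_{k}^*+\widetilde{C}_k\pi_{k+1}^*$, $\pi_k^*=C_k^Tv_k^*+\widetilde{A}_k^T\pi_{k+1}^*$, $X_t^*=x$, $\pi_{N}^*=0$. In this case, the $v^*$ of ii) is the one of i).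
   Context: Let $N>2$ be an integer, $\mathbb{T}_t=\{t,\ldots,N-1\}$, $l^2(\mathbb{T}_t;\mathbb{R}^m)$ the space of $\mathbb{R}^m$-valued sequences on $\mathbb{T}_t$, $l^2(k;\mathbb{R}^m)=\mathbb{R}^m$, $v|_{\mathbb{T}_k}=(v_k,\ldots,v_{N-1})$. System $X_{k+1}=AX_k+B_1u_k+B_2v_k$, $X_t=x$; costs $J_i(t,x;u,v)=\sum_{k=t}^{N-1}(X_k^TQ_iX_k+u_k^TR_iu_k+v_k^TW_iv_k)+X_N^TG_iX_N$, $i=1,2$, with $Q_i,G_i,R_i,W_i$ nonnegative definite; $J_i(k,y;\cdot,\cdot)$ is the same functional started at time $k$ from $y$. Assume $M_k=B_1^TP_{k+1}B_1+R_1>0$, $k\in\mathbb{T}_t$, where $P_k=Q_1+A^TP_{k+1}A-A^TP_{k+1}B_1M_k^{-1}B_1^TP_{k+1}A$, $P_N=G_1$. Set $H^1_k=M_k^{-1}B_1^TP_{k+1}A$, $H^2_k=M_k^{-1}B_1^TP_{k+1}B_2$, $H^3_k=M_k^{-1}B_1^T$, $\widetilde{A}_k=A-B_1H^1_k$, $\widetilde{B}_k=B_2-B_1H^2_k$, $\widetilde{C}_k=-B_1H^3_k$, $C_k=(B_2^T-B_2^TP_{k+1}B_1M_k^{-1}B_1^T)P_{k+1}A$, and $D_i^{(k)}=C_k\widetilde{A}_{k-1}\cdots \widetilde{A}_{i+1}\widetilde{C}_i^T\widetilde{A}_{i+1}^T \cdots \widetilde{A}_{k-1}^T$ (empty products equal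 $I$). The follower's equilibrium response map is $[\alpha^t(x,v)]_k=-(H^1_kX_k+H^2_kv_k+H^3_k\pi_{k+1})$, where $X_{k+1}=\widetilde{A}_kX_k+\widetilde{B}_kv_k+\widetilde{C}_k\pi_{k+1}$, $\pi_k=C_k^Tv_k+\widetilde{A}_k^T\pi_{k+1}$, $X_t=x$, $\pi_N=0$. *)

From HB Require Import structures.
From mathcomp Require Import all_boot all_order all_algebra.
From mathcomp Require Import reals.
Set Implicit Arguments. Unset Strict Implicit. Unset Printing Implicit Defensive.
Import Order.TTheory GRing.Theory Num.Theory.
Local Open Scope ring_scope.

(* Data of the leader-follower LQ game:
   X_{k+1} = A X_k + B1 u_k + B2 v_k,
   J_i = sum (X^T Q_i X + u^T R_i u + v^T W_i v) + X_N^T G_i X_N. *)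
Record game (R : realType) (n m1 m2 : nat) := Game {
  gA  : 'M[R]_n;
  gB1 : 'M[R]_(n, m1);
  gB2 : 'M[R]_(n, m2);
  gQ1 : 'M[R]_n;  gQ2 : 'M[R]_n;
  gG1 : 'M[R]_n;  gG2 : 'M[R]_n;
  gR1 : 'M[R]_m1; gR2 : 'M[R]_m1;
  gW1 : 'M[R]_m2; gW2 : 'M[R]_m2 }.

Section LQ.
Context {R : realType} {n m1 m2 : nat}.

Definition qf {p} (S : 'M[R]_p) (y : 'cV[R]_p) : R := (y^T *m S *m y) 0 0.

Definition nonneg_def {p} (S : 'M[R]_p) : Prop :=
  S^T = S /\ forall y : 'cV[R]_p, 0 <= qf S y.
Definition pos_def {p} (S : 'M[R]_p) : Prop :=
  S^T = S /\ forall y : 'cV[R]_p, y != 0 -> 0 < qf S y.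

Variable N : nat.
Variable g : game R n m1 m2.

Local Notation A := (gA g). Local Notation B1 := (gB1 g). Local Notation B2 := (gB2 g).
Local Notation Q1 := (gQ1 g). Local Notation G1 := (gG1 g). Local Notation R1 := (gR1 g).
Local Notation Q2 := (gQ2 g). Local Notation G2 := (gG2 g). Local Notation R2 := (gR2 g).
Local Notation W2 := (gW2 g).

(* Riccati: Pseq j = P_{N-j}; P_N = G1,
   P_k = Q1 + A^T P_{k+1} A - A^T P_{k+1} B1 M_k^{-1} B1^T P_{k+1} A *)
Fixpoint Pseq (j : nat) : 'M[R]_n :=
  match j with
  | 0 => G1
  | j'.+1 => let P := Pseq j' in
      Q1 + A^T *m P *m A
      - A^T *m P *m B1 *m invmx (B1^T *m P *m B1 + R1) *m B1^T *m P *m A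
  end.
Definition Pk (k : nat) : 'M[R]_n := Pseq (N - k).
Definition Mk (k : nat) : 'M[R]_m1 := B1^T *m Pk k.+1 *m B1 + R1.

Definition H1 (k : nat) : 'M[R]_(m1, n) := invmx (Mk k) *m B1^T *m Pk k.+1 *m A.
Definition H2 (k : nat) : 'M[R]_(m1, m2) := invmx (Mk k) *m B1^T *m Pk k.+1 *m B2.
Definition H3 (k : nat) : 'M[R]_(m1, n) := invmx (Mk k) *m B1^T.
Definition At (k : nat) : 'M[R]_n := A - B1 *m H1 k.
Definition Bt (k : nat) : 'M[R]_(n, m2) := B2 - B1 *m H2 k.
Definition Ct (k : nat) : 'M[R]_n := - (B1 *m H3 k).
Definition Ck (k : nat) : 'M[R]_(m2, n) :=
  (B2^T - B2^T *m Pk k.+1 *m B1 *m invmx (Mk k) *m B1^T) *m Pk k.+1 *m A.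

Fixpoint Phi (k s : nat) : 'M[R]_n :=
  match k with
  | 0 => 1%:M
  | k'.+1 => if k'.+1 <= s then 1%:M else At k' *m Phi k' s
  end%N.

Definition Dmat (i k : nat) : 'M[R]_(m2, n) :=
  Ck k *m Phi k i.+1 *m (Ct i)^T *m (Phi k i.+1)^T.

(* pi_k = C_k^T v_k + At_k^T pi_{k+1}, pi_N = 0;  piseq j = pi_{N-j} *)
Fixpoint piseq (v : nat -> 'cV[R]_m2) (j : nat) : 'cV[R]_n :=
  match j with
  | 0 => 0
  | j'.+1 => (Ck (N - j'.+1))^T *m v (N - j'.+1)%N + (At (N - j'.+1))^T *m piseq v j'
  end.
Definition piv (v : nat -> 'cV[R]_m2) (k : nat) : 'cV[R]_n := piseq v (N - k).

(* X_{k+1} = At_k X_k + Bt_k v_k + Ct_k pi_{k+1}, X_t = x;  Xtseq j = X_{t+j} *)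
Fixpoint Xtseq (t : nat) (x : 'cV[R]_n) (v : nat -> 'cV[R]_m2) (j : nat) : 'cV[R]_n :=
  match j with
  | 0 => x
  | j'.+1 => At (t + j') *m Xtseq t x v j' + Bt (t + j') *m v (t + j')%N
             + Ct (t + j') *m piv v (t + j').+1
  end.
Definition Xt (t : nat) (x : 'cV[R]_n) (v : nat -> 'cV[R]_m2) (k : nat) : 'cV[R]_n :=
  Xtseq t x v (k - t).

(* follower's equilibrium response [alpha^t(x,v)]_k *)
Definition alpha (t : nat) (x : 'cV[R]_n) (v : nat -> 'cV[R]_m2) (k : nat) : 'cV[R]_m1 :=
  - (H1 k *m Xt t x v k + H2 k *m v k + H3 k *m piv v k.+1).

(* state of the original system started at time k from y: trajseq j = X_{k+j} *)
Fixpoint trajseq (k : nat) (y : 'cV[R]_n) (u : nat -> 'cV[R]_m1)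
    (v : nat -> 'cV[R]_m2) (j : nat) : 'cV[R]_n :=
  match j with
  | 0 => y
  | j'.+1 => A *m trajseq k y u v j' + B1 *m u (k + j')%N + B2 *m v (k + j')%N
  end.
Definition traj (k : nat) (y : 'cV[R]_n) (u : nat -> 'cV[R]_m1)
    (v : nat -> 'cV[R]_m2) (l : nat) : 'cV[R]_n := trajseq k y u v (l - k).

Definition J2 (k : nat) (y : 'cV[R]_n) (u : nat -> 'cV[R]_m1) (v : nat -> 'cV[R]_m2) : R :=
  \sum_(k <= l < N) (qf Q2 (traj k y u v l) + qf R2 (u l) + qf (gW2 g) (v l))
  + qf G2 (traj k y u v N).

Definition upd (v : nat -> 'cV[R]_m2) (k : nat) (w : 'cV[R]_m2) : nat -> 'cV[R]_m2 :=
  fun l => if l == k then w else v l.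

Definition cond_i (t : nat) (x : 'cV[R]_n) (v : nat -> 'cV[R]_m2) : Prop :=
  let Xs := traj t x (alpha t x v) v in
  forall k, (t <= k < N)%N -> forall w : 'cV[R]_m2,
    J2 k (Xs k) (alpha t x v) v
    <= J2 k (Xs k) (alpha t x (upd v k w)) (upd v k w).

(* Z_k = Q2 X_k + A^T Z_{k+1}, Z_N = G2 X_N; Zseq j = Z_{N-j} *)
Fixpoint Zseq (t : nat) (x : 'cV[R]_n) (v : nat -> 'cV[R]_m2) (j : nat) : 'cV[R]_n :=
  match j with
  | 0 => G2 *m Xt t x v N
  | j'.+1 => Q2 *m Xt t x v (N - j'.+1) + A^T *m Zseq t x v j'
  end.
Definition Z (t : nat) (x : 'cV[R]_n) (v : nat -> 'cV[R]_m2) (k : nat) : 'cV[R]_n :=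
  Zseq t x v (N - k).

(* Zbar^{(k)}_l, l in T_k, Zbar_N = 0 (recursion independent of k);
   Zbarseq j = Zbar_{N-j} *)
Fixpoint Zbarseq (t : nat) (x : 'cV[R]_n) (v : nat -> 'cV[R]_m2) (j : nat) : 'cV[R]_n :=
  match j with
  | 0 => 0
  | j'.+1 => let l := (N - j'.+1)%N in
      (H1 l)^T *m R2 *m (H1 l *m Xt t x v l + H2 l *m v l + H3 l *m piv v l.+1)
      - (H1 l)^T *m B1^T *m Z t x v l.+1 + (At l)^T *m Zbarseq t x v j'
  end.
Definition Zbar (t : nat) (x : 'cV[R]_n) (v : nat -> 'cV[R]_m2) (k l : nat) : 'cV[R]_n :=
  Zbarseq t x v (N - l).

Definition cond_ii (t : nat) (x : 'cV[R]_n) (v : nat -> 'cV[R]_m2) : Prop :=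
  forall k, (t <= k < N)%N ->
    0 = ((Bt k)^T - \sum_(t <= i < k) Dmat i k *m (H1 k)^T *m B1^T) *m Z t x v k.+1
      + ((Bt k)^T + \sum_(t <= i < k) Dmat i k *m (At k)^T) *m Zbar t x v k k.+1
      + ((H2 k)^T *m R2 *m H1 k
         + \sum_(t <= i < k) Dmat i k *m (H1 k)^T *m R2 *m H1 k) *m Xt t x v k
      + (W2 + (H2 k)^T *m R2 *m H2 k
         + \sum_(t <= i < k) Dmat i k *m (H1 k)^T *m R2 *m H2 k) *m v k
      + ((H2 k)^T *m R2 *m H3 k
         + \sum_(t <= i < k) Dmat i k *m (H1 k)^T *m R2 *m H3 k) *m piv v k.+1.

End LQ.

(* existence and uniqueness of an element of l^2(T_t; R^m), i.e. a sequence
   identified by its values on T_t = {t,...,N-1} *)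
Definition exists_unique_on {T : Type} (t N : nat) (P : (nat -> T) -> Prop) : Prop :=
  exists v, P v /\ forall w, P w -> forall k, (t <= k < N)%N -> w k = v k.

(* Since the follower's response alpha is affine in (x, v), moving the leader's
   k-th control from v_k to v_k + s d turns J2(k, X*_k; ...) into a quadratic
   polynomial in s.  Its leading coefficient is the cost of the response to an
   impulse d at time k started from 0, hence nonnegative, so the inequality of
   i) holds at k iff the linear coefficient vanishes for every d.  Two
   summations by parts compute that coefficient: against the adjoint Z for the
   deviation of the original state, and against Zbar for the closed-loop
   impulse response, which starts at (sum_i D_i^(k))^T d at time k and moves
   freely afterwards.  The result is d^T times the right-hand side of ii), so
   i) and ii) are satisfied by exactly the same v. *)

From Pilot Require Import Defs.
From HB Require Import structures.
From mathcomp Require Import all_boot all_order all_algebra.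
From mathcomp Require Import reals.
From mathcomp Require Import ring lra zify.
From Stdlib Require Import FunctionalExtensionality.
Import Order.TTheory GRing.Theory Num.Theory.
Local Open Scope ring_scope.

Lemma entryD (R : nmodType) m n (A B : 'M[R]_(m, n)) i j : (A + B) i j = A i j + B i j.
Proof. by rewrite mxE. Qed.

Lemma entryN (R : zmodType) m n (A : 'M[R]_(m, n)) i j : (- A) i j = - A i j.
Proof. by rewrite mxE. Qed.

Lemma trmxD (R : nmodType) m n (A B : 'M[R]_(m, n)) : (A + B)^T = A^T + B^T.
Proof. exact: raddfD. Qed.

Lemma trmxN (R : zmodType) m n (A : 'M[R]_(m, n)) : (- A)^T = - A^T.
Proof. exact: raddfN. Qed.

Lemma trmx_sum (R : nmodType) m n I (r : seq I) (P : pred I) (F : I -> 'M[R]_(m, n)) :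
  (\sum_(i <- r | P i) F i)^T = \sum_(i <- r | P i) (F i)^T.
Proof. exact: raddf_sum. Qed.

Ltac expand_entries :=
  rewrite ?(trmxD, trmxN, trmx_mul, trmxK);
  rewrite ?(mulmxDl, mulmxDr, mulmxBl, mulmxBr, mulmxN, mulNmx, mulmxA);
  rewrite ?(entryD, entryN).

Section Dot.
Context {R : realFieldType}.

Definition dot {p} (u w : 'cV[R]_p) : R := (u^T *m w) 0 0.

Lemma dotDl p (a b w : 'cV[R]_p) : dot (a + b) w = dot a w + dot b w.
Proof. by rewrite /dot trmxD mulmxDl entryD. Qed.

Lemma dotDr p (a b w : 'cV[R]_p) : dot w (a + b) = dot w a + dot w b.
Proof. by rewrite /dot mulmxDr entryD. Qed.

Lemma dotZl p s (a w : 'cV[R]_p) : dot (s *: a) w = s * dot a w.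
Proof. by rewrite /dot linearZ /= -scalemxAl mxE. Qed.

Lemma dotZr p s (a w : 'cV[R]_p) : dot w (s *: a) = s * dot w a.
Proof. by rewrite /dot -scalemxAr mxE. Qed.

Lemma dotC p (u w : 'cV[R]_p) : dot u w = dot w u.
Proof. by rewrite /dot -[w^T *m u]trmxK trmx_mul !trmxK [RHS]mxE. Qed.

Lemma dot0l p (w : 'cV[R]_p) : dot 0 w = 0.
Proof. by rewrite /dot trmx0 mul0mx mxE. Qed.

Lemma dot0r p (w : 'cV[R]_p) : dot w 0 = 0.
Proof. by rewrite /dot mulmx0 mxE. Qed.

Lemma dot_mulmxl q p (M : 'M[R]_(q, p)) (u : 'cV[R]_p) (w : 'cV[R]_q) :
  dot (M *m u) w = dot u (M^T *m w).
Proof. by rewrite /dot trmx_mul mulmxA. Qed.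

Lemma dotvv_eq0 p (u : 'cV[R]_p) : dot u u = 0 -> u = 0.
Proof.
rewrite /dot mxE => sum0; apply/matrixP => i j; rewrite (ord1 j) mxE.
have sq_ge0 (k : 'I_p) : true -> 0 <= u^T 0 k * u k 0.
  by rewrite mxE -expr2 sqr_ge0.
have /eqP := (psumr_eq0P sq_ge0 sum0) i isT.
by rewrite mxE mulf_eq0 orbb => /eqP.
Qed.

(* Summation by parts against an adjoint (costate) recursion. *)
Lemma dot_adjoint_sum p a N (M : nat -> 'M[R]_p) (d b F Y : nat -> 'cV[R]_p) :
  (a <= N)%N ->
  (forall l, (a <= l < N)%N -> d l.+1 = M l *m d l + b l) ->
  (forall l, (a <= l < N)%N -> Y l = F l + (M l)^T *m Y l.+1) ->
  dot (d a) (Y a) + \sum_(a <= l < N) dot (b l) (Y l.+1)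
  = \sum_(a <= l < N) dot (d l) (F l) + dot (d N) (Y N).
Proof.
elim: N => [|N IH]; first by rewrite leqn0 => /eqP-> _ _; rewrite !big_geq // addr0 add0r.
rewrite leq_eqVlt => /orP[/eqP<- _ _|aN dS YS]; first by rewrite !big_geq // addr0 add0r.
have aNN : (a <= N < N.+1)%N by rewrite ltnSn -ltnS aN.
have restr P : (forall l, (a <= l < N.+1)%N -> P l) -> forall l, (a <= l < N)%N -> P l.
  by move=> h l /andP[al lN]; apply: h; rewrite al ltnW.
rewrite !big_nat_recr //= addrA (IH aN (restr _ dS) (restr _ YS)).
rewrite (YS N aNN) (dS N aNN) dotDr dotDl dot_mulmxl.
by rewrite -!addrA; congr (_ + _); rewrite addrCA.
Qed.

Lemma quadratic_ge0_iff (q b : R) :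
  0 <= q -> (forall s, 0 <= s ^+ 2 * q + 2 * s * b) <-> b = 0.
Proof.
move=> q0; split=> [h|-> s]; last by rewrite mulr0 addr0 mulr_ge0 ?sqr_ge0.
have q1 : q + 1 != 0 by rewrite lt0r_neq0 // ltr_wpDl.
set s := - b / (q + 1).
have bE : b = - (s * (q + 1)) by rewrite /s divfK // opprK.
have := h s; rewrite bE => hs.
have s2 : s ^+ 2 <= 0 by nra.
have s0 : s = 0 by apply/eqP; rewrite -sqrf_eq0 eq_le s2 sqr_ge0.
by rewrite s0 mul0r oppr0.
Qed.

End Dot.

Section QuadraticForm.
Context {R : realType}.

Lemma qfE p (S : 'M[R]_p) y : qf S y = dot y (S *m y).
Proof. by rewrite /qf /dot mulmxA. Qed.

Lemma qfZD p (S : 'M[R]_p) s (a b : 'cV[R]_p) : S^T = S ->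
  qf S (s *: a + b) = s ^+ 2 * qf S a + 2 * s * dot a (S *m b) + qf S b.
Proof.
move=> symS; rewrite !qfE mulmxDr -scalemxAr !(dotDl, dotDr, dotZl, dotZr).
rewrite [dot b (S *m a)]dotC dot_mulmxl symS; ring.
Qed.

End QuadraticForm.

Lemma addrACA3 (V : nmodType) (a b c d e f : V) :
  a + b + (c + d) + (e + f) = a + c + e + (b + d + f).
Proof. by rewrite (addrACA a) (addrACA (a + c)). Qed.

Lemma exists_unique_on_iff (T : Type) t N (P Q : (nat -> T) -> Prop) :
  (forall v, P v <-> Q v) -> exists_unique_on t N P <-> exists_unique_on t N Q.
Proof.
move=> PQ; split=> -[v [Pv uniq]]; exists v; split=> [|w Pw]; try by apply/PQ.
- by apply: uniq; apply/PQ.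
- by apply: uniq; apply/PQ.
Qed.

Lemma subKSn {N l : nat} : (l < N)%N -> (N - (N - l.+1).+1)%N = l.
Proof. lia. Qed.

Section ClosedLoop.
Context {R : realType} {n m1 m2 : nat} (N : nat) (g : game R n m1 m2).

Local Notation A := (gA g).
Local Notation B1 := (gB1 g).
Local Notation B2 := (gB2 g).
Local Notation Q2 := (gQ2 g).
Local Notation G2 := (gG2 g).
Local Notation R2 := (gR2 g).
Local Notation W2 := (gW2 g).
Local Notation At := (At N g).
Local Notation Bt := (Bt N g).
Local Notation Ct := (Ct N g).
Local Notation Ck := (Ck N g).
Local Notation H1 := (H1 N g).
Local Notation H2 := (H2 N g).
Local Notation H3 := (H3 N g).
Local Notation Phi := (Phi N g).
Local Notation Dmat := (Dmat N g).
Local Notation piv := (piv N g).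
Local Notation Xt := (Xt N g).
Local Notation alpha := (alpha N g).
Local Notation traj := (traj g).
Local Notation J2 := (J2 N g).
Local Notation Z := (Z N g).
Local Notation Zbar := (Zbar N g).

Lemma piv_rec v l : (l < N)%N -> piv v l = (Ck l)^T *m v l + (At l)^T *m piv v l.+1.
Proof. by move=> lN; rewrite /Defs.piv -(subnSK lN) [piseq _ _ _ _.+1]/= (subKSn lN). Qed.

Lemma Z_N t x v : Z t x v N = G2 *m Xt t x v N.
Proof. by rewrite /Defs.Z subnn. Qed.

Lemma Z_rec t x v l : (l < N)%N -> Z t x v l = Q2 *m Xt t x v l + A^T *m Z t x v l.+1.
Proof. by move=> lN; rewrite /Defs.Z -(subnSK lN) [Zseq _ _ _ _ _ _.+1]/= (subKSn lN). Qed.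

Lemma Zbar_N t x v k : Zbar t x v k N = 0.
Proof. by rewrite /Defs.Zbar subnn. Qed.

Definition Zbar_force t x v l : 'cV[R]_n :=
  (H1 l)^T *m R2 *m (H1 l *m Xt t x v l + H2 l *m v l + H3 l *m piv v l.+1)
  - (H1 l)^T *m B1^T *m Z t x v l.+1.

Lemma Zbar_rec t x v k l : (l < N)%N ->
  Zbar t x v k l = Zbar_force t x v l + (At l)^T *m Zbar t x v k l.+1.
Proof. by move=> lN; rewrite /Defs.Zbar -(subnSK lN) [Zbarseq _ _ _ _ _ _.+1]/= (subKSn lN). Qed.

Lemma Xt_t t x v : Xt t x v t = x.
Proof. by rewrite /Defs.Xt subnn. Qed.

Lemma Xt_rec t x v l : (t <= l)%N ->
  Xt t x v l.+1 = At l *m Xt t x v l + Bt l *m v l + Ct l *m piv v l.+1.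
Proof. by move=> tl; rewrite /Defs.Xt subSn //= subnKC. Qed.

Lemma traj_k k y u v : traj k y u v k = y.
Proof. by rewrite /Defs.traj subnn. Qed.

Lemma traj_rec k y u v l : (k <= l)%N ->
  traj k y u v l.+1 = A *m traj k y u v l + B1 *m u l + B2 *m v l.
Proof. by move=> kl; rewrite /Defs.traj subSn //= subnKC. Qed.

Lemma Phi_nn s : Phi s s = 1%:M.
Proof. by case: s => //= s; rewrite leqnn. Qed.

Lemma Phi_Sl l s : (s <= l)%N -> Phi l.+1 s = At l *m Phi l s.
Proof. by move=> sl /=; rewrite leqNgt ltnS sl. Qed.

Lemma Phi_Sr {k l} : (l < k)%N -> Phi k l = Phi k l.+1 *m At l.
Proof.
elim: k => // k IH lk; rewrite Phi_Sl; last by rewrite -ltnS.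
case: (ltngtP l k) => [lk'|kl|<-].
- by rewrite IH // Phi_Sl // mulmxA.
- by move: lk; rewrite ltnS leqNgt kl.
- by rewrite !Phi_nn mulmx1 mul1mx.
Qed.

Lemma traj_alpha t x v k l : (t <= k)%N -> (k <= l)%N ->
  traj k (Xt t x v k) (alpha t x v) v l = Xt t x v l.
Proof.
move=> tk; elim: l => [|l IH]; first by rewrite leqn0 => /eqP->; rewrite traj_k.
rewrite leq_eqVlt => /orP[/eqP<-|kl]; first by rewrite traj_k.
have kl' : (k <= l)%N by rewrite -ltnS.
rewrite traj_rec // IH // Xt_rec ?(leq_trans tk kl') //.
rewrite /Defs.alpha /Defs.At /Defs.Bt /Defs.Ct.
by apply/matrixP => i j; expand_entries; lra.
Qed.

Lemma traj_alpha_t t x v l : (t <= l)%N -> traj t x (alpha t x v) v l = Xt t x v l.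
Proof. by move=> tl; rewrite -{1}(Xt_t t x v) traj_alpha. Qed.

Definition lincomb {p} (s : R) (v1 v2 : nat -> 'cV[R]_p) : nat -> 'cV[R]_p :=
  fun l => s *: v1 l + v2 l.

Lemma piv_lincomb s v1 v2 l : piv (lincomb s v1 v2) l = s *: piv v1 l + piv v2 l.
Proof.
rewrite /Defs.piv; elim: (N - l)%N => [|j IH] /=; first by rewrite scaler0 addr0.
by rewrite IH /lincomb !mulmxDr -!scalemxAr scalerDr addrACA.
Qed.

Lemma Xt_lincomb s t x1 x2 v1 v2 l :
  Xt t (s *: x1 + x2) (lincomb s v1 v2) l = s *: Xt t x1 v1 l + Xt t x2 v2 l.
Proof.
rewrite /Defs.Xt; elim: (l - t)%N => [|j IH] //=.
by rewrite IH piv_lincomb {1}/lincomb !mulmxDr -!scalemxAr !scalerDr addrACA3.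
Qed.

Lemma alpha_lincomb s t x1 x2 v1 v2 :
  alpha t (s *: x1 + x2) (lincomb s v1 v2) = lincomb s (alpha t x1 v1) (alpha t x2 v2).
Proof.
apply: functional_extensionality => l.
rewrite /Defs.alpha /lincomb Xt_lincomb piv_lincomb !mulmxDr -!scalemxAr.
by rewrite scalerN -opprD !scalerDr addrACA3.
Qed.

Lemma traj_lincomb s k y1 y2 u1 u2 v1 v2 l :
  traj k (s *: y1 + y2) (lincomb s u1 u2) (lincomb s v1 v2) l =
  s *: traj k y1 u1 v1 l + traj k y2 u2 v2 l.
Proof.
rewrite /Defs.traj; elim: (l - k)%N => [|j IH] //=.
by rewrite IH /lincomb !mulmxDr -!scalemxAr !scalerDr addrACA3.
Qed.

Definition J2_cross k y1 u1 v1 y2 u2 v2 : R :=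
  \sum_(k <= l < N) (dot (traj k y1 u1 v1 l) (Q2 *m traj k y2 u2 v2 l)
     + dot (u1 l) (R2 *m u2 l) + dot (v1 l) (W2 *m v2 l))
  + dot (traj k y1 u1 v1 N) (G2 *m traj k y2 u2 v2 N).

Lemma J2_lincomb s k y1 y2 u1 u2 v1 v2 :
  Q2^T = Q2 -> R2^T = R2 -> W2^T = W2 -> G2^T = G2 ->
  J2 k (s *: y1 + y2) (lincomb s u1 u2) (lincomb s v1 v2) =
  s ^+ 2 * J2 k y1 u1 v1 + 2 * s * J2_cross k y1 u1 v1 y2 u2 v2 + J2 k y2 u2 v2.
Proof.
move=> sQ sR sW sG; rewrite /Defs.J2 /J2_cross traj_lincomb qfZD //.
under eq_bigr => l _ do rewrite traj_lincomb /lincomb !qfZD //.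
rewrite !big_split /= -!mulr_sumr; ring.
Qed.

Lemma J2_ge0 k y u v :
  nonneg_def Q2 -> nonneg_def R2 -> nonneg_def W2 -> nonneg_def G2 -> 0 <= J2 k y u v.
Proof.
move=> [_ Q0] [_ R0] [_ W0] [_ G0]; rewrite /Defs.J2 addr_ge0 //.
by apply: sumr_ge0 => l _; rewrite !addr_ge0.
Qed.

Definition impulse k (d : 'cV[R]_m2) : nat -> 'cV[R]_m2 := upd (fun=> 0) k d.

Lemma upd_impulse v k d s : upd v k (s *: d + v k) = lincomb s (impulse k d) v.
Proof.
apply: functional_extensionality => l; rewrite /impulse /upd /lincomb.
by case: eqP => [->|_]; rewrite ?scaler0 ?add0r.
Qed.

Lemma J2_upd t x v k y d s :
  Q2^T = Q2 -> R2^T = R2 -> W2^T = W2 -> G2^T = G2 ->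
  J2 k y (alpha t x (upd v k (s *: d + v k))) (upd v k (s *: d + v k)) =
  s ^+ 2 * J2 k 0 (alpha t 0 (impulse k d)) (impulse k d)
  + 2 * s * J2_cross k 0 (alpha t 0 (impulse k d)) (impulse k d) y (alpha t x v) v
  + J2 k y (alpha t x v) v.
Proof.
move=> sQ sR sW sG.
rewrite upd_impulse -[x]add0r -(scaler0 _ s) alpha_lincomb scaler0 add0r.
by rewrite -J2_lincomb // scaler0 add0r.
Qed.

Lemma impulse_at k d : impulse k d k = d.
Proof. by rewrite /impulse /upd eqxx. Qed.

Lemma impulse_off k d l : l != k -> impulse k d l = 0.
Proof. by rewrite /impulse /upd => /negPf->. Qed.

Lemma piv_impulse_gt k d l : (k < l)%N -> piv (impulse k d) l = 0.
Proof.
rewrite /Defs.piv; move Hj: (N - l)%N => j.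
elim: j l Hj => [|j IH] l Hj kl; first by [].
have lE : (N - j.+1)%N = l by lia.
rewrite [piseq _ _ _ _.+1]/= lE impulse_off ?gtn_eqF // mulmx0 add0r.
by rewrite (IH l.+1) ?mulmx0 //; lia.
Qed.

Lemma piv_impulse_le k d l : (l <= k < N)%N ->
  piv (impulse k d) l = (Phi k l)^T *m (Ck k)^T *m d.
Proof.
case/andP=> + kN; move Hj: (k - l)%N => j; elim: j l Hj => [|j IH] l Hj lk.
  have -> : l = k by lia.
  by rewrite piv_rec // impulse_at piv_impulse_gt // mulmx0 addr0 Phi_nn trmx1 mul1mx.
have lk' : (l < k)%N by lia.
rewrite piv_rec ?(ltn_trans lk' kN) // impulse_off ?ltn_eqF // mulmx0 add0r.
rewrite IH; [|lia|lia].
by rewrite (Phi_Sr lk') (trmx_mul (Phi k l.+1)) !mulmxA.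
Qed.

Lemma Xt0_sum t v l : (t <= l)%N -> (forall i, (t <= i < l)%N -> v i = 0) ->
  Xt t 0 v l = \sum_(t <= i < l) Phi l i.+1 *m Ct i *m piv v i.+1.
Proof.
elim: l => [|l IH]; first by rewrite leqn0 => /eqP-> _; rewrite Xt_t big_geq.
rewrite leq_eqVlt => /orP[/eqP<- _|tl v0]; first by rewrite Xt_t big_geq.
rewrite Xt_rec // (IH tl) => [|i /andP[ti il]]; last by rewrite v0 // ti ltnW.
rewrite (v0 l); last by lia.
rewrite mulmx0 addr0 big_nat_recr // Phi_nn mul1mx mulmx_sumr.
by congr (_ + _); apply: eq_big_nat => i /andP[_ il]; rewrite Phi_Sl // !mulmxA.
Qed.

Lemma Xt_impulse t k d : (t <= k < N)%N ->
  Xt t 0 (impulse k d) k = (\sum_(t <= i < k) Dmat i k)^T *m d.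
Proof.
case/andP=> tk kN; rewrite Xt0_sum // => [|i /andP[_ ik]]; last by rewrite impulse_off // ltn_eqF.
rewrite trmx_sum mulmx_suml; apply: eq_big_nat => i /andP[_ ik].
by rewrite piv_impulse_le ?ik // /Defs.Dmat !trmx_mul !trmxK !mulmxA.
Qed.

Definition gradJ2 t x v k : 'cV[R]_m2 :=
  ((Bt k)^T - \sum_(t <= i < k) Dmat i k *m (H1 k)^T *m B1^T) *m Z t x v k.+1
  + ((Bt k)^T + \sum_(t <= i < k) Dmat i k *m (At k)^T) *m Zbar t x v k k.+1
  + ((H2 k)^T *m R2 *m H1 k
     + \sum_(t <= i < k) Dmat i k *m (H1 k)^T *m R2 *m H1 k) *m Xt t x v k
  + (W2 + (H2 k)^T *m R2 *m H2 k
     + \sum_(t <= i < k) Dmat i k *m (H1 k)^T *m R2 *m H2 k) *m v k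
  + ((H2 k)^T *m R2 *m H3 k
     + \sum_(t <= i < k) Dmat i k *m (H1 k)^T *m R2 *m H3 k) *m piv v k.+1.

Lemma cond_iiE t x v :
  cond_ii N g t x v <-> forall k, (t <= k < N)%N -> gradJ2 t x v k = 0.
Proof. by split=> h k /h. Qed.

(* Summation by parts against Z: a deviation (u, e) from the equilibrium
   trajectory enters the cross term only through B1 u + B2 e. *)
Lemma J2_cross_adjoint t x v k u e : (t <= k < N)%N ->
  J2_cross k 0 u e (Xt t x v k) (alpha t x v) v =
  \sum_(k <= l < N) (dot (B1 *m u l + B2 *m e l) (Z t x v l.+1)
    + dot (u l) (R2 *m alpha t x v l) + dot (e l) (W2 *m v l)).
Proof.
case/andP=> tk kN; rewrite /J2_cross.
under eq_big_nat => l /andP[kl _] do rewrite traj_alpha //.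
rewrite (traj_alpha _ _ _ _ _ tk (ltnW kN)).
have := @dot_adjoint_sum _ _ k N (fun=> A) (traj k 0 u e) (fun l => B1 *m u l + B2 *m e l)
  (fun l => Q2 *m Xt t x v l) (Z t x v) (ltnW kN).
rewrite traj_k dot0l add0r Z_N => adj.
rewrite !big_split /= adj => [|l /andP[kl _]|l /andP[_ lN]].
- lra.
- by rewrite traj_rec // addrA.
- exact: Z_rec.
Qed.

(* After time k the impulse response is a free closed-loop motion, so a
   second summation by parts, now against Zbar, collapses the tail. *)
Lemma J2_cross_impulse_tail t x v k d : (t <= k < N)%N ->
  \sum_(k.+1 <= l < N)
    (dot (B1 *m alpha t 0 (impulse k d) l + B2 *m impulse k d l) (Z t x v l.+1)
     + dot (alpha t 0 (impulse k d) l) (R2 *m alpha t x v l)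
     + dot (impulse k d l) (W2 *m v l))
  = dot (Xt t 0 (impulse k d) k.+1) (Zbar t x v k k.+1).
Proof.
case/andP=> tk kN.
have tail_term l : (k.+1 <= l < N)%N ->
    dot (B1 *m alpha t 0 (impulse k d) l + B2 *m impulse k d l) (Z t x v l.+1)
    + dot (alpha t 0 (impulse k d) l) (R2 *m alpha t x v l)
    + dot (impulse k d l) (W2 *m v l)
  = dot (Xt t 0 (impulse k d) l) (Zbar_force t x v l).
  case/andP=> kl _; rewrite /Defs.alpha impulse_off ?gtn_eqF //.
  rewrite (piv_impulse_gt k d l.+1 (leqW kl)) /Zbar_force dot0l !mulmx0 !addr0.
  (* Generalizing keeps [mulmxA] from unfolding these products while expanding. *)
  move: (H1 l) (H2 l) (H3 l) => h1 h2 h3.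
  by rewrite /dot; expand_entries; lra.
rewrite (eq_big_nat _ _ tail_term).
have := @dot_adjoint_sum _ _ k.+1 N At (Xt t 0 (impulse k d)) (fun=> 0)
  (Zbar_force t x v) (Zbar t x v k) kN.
have zero_sum : \sum_(k.+1 <= l < N) dot (0 : 'cV_n) (Zbar t x v k l.+1) = 0.
  by rewrite big1 // => l _; rewrite dot0l.
rewrite zero_sum Zbar_N dot0r addr0 => adj.
rewrite adj => [|l /andP[kl _]|l /andP[_ lN]].
- by rewrite addr0.
- rewrite Xt_rec ?(leq_trans tk (ltnW kl)) // impulse_off ?gtn_eqF //.
  by rewrite (piv_impulse_gt k d l.+1 (leqW kl)) !mulmx0 !addr0.
- exact: Zbar_rec.
Qed.

Lemma J2_cross_impulse_head t x v k d : (t <= k < N)%N ->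
  dot (B1 *m alpha t 0 (impulse k d) k + B2 *m impulse k d k) (Z t x v k.+1)
  + dot (alpha t 0 (impulse k d) k) (R2 *m alpha t x v k)
  + dot (impulse k d k) (W2 *m v k)
  + dot (Xt t 0 (impulse k d) k.+1) (Zbar t x v k k.+1)
  = dot d (gradJ2 t x v k).
Proof.
move=> tkN; have /andP[tk kN] := tkN.
rewrite /Defs.alpha Xt_rec // Xt_impulse // impulse_at piv_impulse_gt // !mulmx0 !addr0.
rewrite /gradJ2 -!mulmx_suml /Defs.Bt.
move: (\sum_(t <= i < k) Dmat i k) (H1 k) (H2 k) (H3 k) (At k) => S h1 h2 h3 Ak.
by rewrite /dot; expand_entries; lra.
Qed.

Lemma J2_cross_impulse t x v k d : (t <= k < N)%N ->
  J2_cross k 0 (alpha t 0 (impulse k d)) (impulse k d) (Xt t x v k) (alpha t x v) v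
  = dot d (gradJ2 t x v k).
Proof.
move=> tkN; have /andP[_ kN] := tkN.
by rewrite J2_cross_adjoint // big_ltn // J2_cross_impulse_tail // J2_cross_impulse_head.
Qed.

Lemma cond_i_at_iff t x v k :
  nonneg_def Q2 -> nonneg_def R2 -> nonneg_def W2 -> nonneg_def G2 -> (t <= k < N)%N ->
  (forall w, J2 k (Xt t x v k) (alpha t x v) v
             <= J2 k (Xt t x v k) (alpha t x (upd v k w)) (upd v k w))
  <-> gradJ2 t x v k = 0.
Proof.
move=> nQ nR nW nG tkN.
move: (nQ) (nR) (nW) (nG) => [sQ _] [sR _] [sW _] [sG _].
have expand d s : J2 k (Xt t x v k) (alpha t x (upd v k (s *: d + v k))) (upd v k (s *: d + v k))
  = s ^+ 2 * J2 k 0 (alpha t 0 (impulse k d)) (impulse k d)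
    + 2 * s * dot d (gradJ2 t x v k) + J2 k (Xt t x v k) (alpha t x v) v.
  by rewrite J2_upd // J2_cross_impulse.
have J0 d := J2_ge0 k 0 (alpha t 0 (impulse k d)) (impulse k d) nQ nR nW nG.
set Jv := J2 k (Xt t x v k) (alpha t x v) v in expand *.
split=> [min_v|grad0 w].
- apply: dotvv_eq0; apply/(quadratic_ge0_iff _ _ (J0 (gradJ2 t x v k))) => s.
  by have := min_v (s *: gradJ2 t x v k + v k); rewrite expand lerDr.
- have -> : w = 1 *: (w - v k) + v k by rewrite scale1r subrK.
  by rewrite expand grad0 dot0r mulr0 addr0 lerDr expr1n mul1r.
Qed.

Lemma cond_i_iff_ii t x v :
  nonneg_def Q2 -> nonneg_def R2 -> nonneg_def W2 -> nonneg_def G2 ->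
  cond_i N g t x v <-> cond_ii N g t x v.
Proof.
move=> nQ nR nW nG; rewrite cond_iiE /cond_i /=.
split=> h k tkN; have /andP[tk _] := tkN.
- by apply/(cond_i_at_iff _ _ _ _ nQ nR nW nG tkN) => w; rewrite -traj_alpha_t //; exact: h.
- by move=> w; rewrite traj_alpha_t //; apply/(cond_i_at_iff _ _ _ _ nQ nR nW nG tkN): w; exact: h.
Qed.

End ClosedLoop.

Theorem theorem2 (R : realType) (n m1 m2 N : nat) (g : game R n m1 m2)
    (t : nat) (x : 'cV[R]_n) :
  (2 < N)%N -> (t < N)%N ->
  nonneg_def (gQ1 g) -> nonneg_def (gQ2 g) ->
  nonneg_def (gG1 g) -> nonneg_def (gG2 g) ->
  nonneg_def (gR1 g) -> nonneg_def (gR2 g) ->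
  nonneg_def (gW1 g) -> nonneg_def (gW2 g) ->
  (forall k, (t <= k < N)%N -> pos_def (Mk N g k)) ->
  (exists_unique_on t N (cond_i N g t x) <-> exists_unique_on t N (cond_ii N g t x))
  /\ (exists_unique_on t N (cond_i N g t x) ->
      forall v w, cond_i N g t x v -> cond_ii N g t x w ->
      forall k, (t <= k < N)%N -> v k = w k).
Proof.
move=> _ _ _ nQ _ nG _ nR _ nW _.
have i_iff_ii v := cond_i_iff_ii N g t x v nQ nR nW nG.
split; first exact: exists_unique_on_iff.
move=> [v0 [_ uniq]] v w /uniq vE /i_iff_ii/uniq wE k tkN.
by rewrite vE // wE.
Qed.
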